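(* Let $m,n,d,e$ be positive integers with $m=2n$ and $e=\gcd(n,d)=\gcd(m,d)$, and let $s\ge u\ge1$ be integers. If $(x_1,x_2,\dots,x_{2u})\in V_{s,u}$, then $x_1,x_2,x_4,x_6,\dots,x_{2u}$ are linearly dependent over $\mathbb{F}_{2^e}$.
   Context: For integers $s\ge0$ and $u\ge1$, $V_{s,u}$ denotes the set of solutions $(x_1,\dots,x_{2u})\in\mathbb{F}_{2^m}^{2u}$ of the system \[\sum_{i=1}^u\big(x_{2i-1}x_{2i}^{2^{(\frac{n}{e}-j)d}}+x_{2i-1}^{2^{(\frac{n}{e}-j)d}}x_{2i}\big)=0,\qquad j=0,1,\dots,s.\] *)

From HB Require Import structures.
From mathcomp Require Import all_boot all_order all_algebra all_field.
Set Implicit Arguments. Unset Strict Implicit. Unset Printing Implicit Defensive.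
Import Order.TTheory GRing.Theory Num.Theory.
Local Open Scope ring_scope.

(* Frobenius power x |-> x^(2^k) for an integer k, in a field with 2^m
   elements: since x^(2^m) = x, the exponent k is read modulo m
   (this makes sense of negative k). *)
Definition frobz (F : finFieldType) (m : nat) (k : int) (x : F) : F :=
  x ^+ (2 ^ `|(k %% (m%:Z))%Z|%N).

Definition Vexp (n d e j : nat) : int :=
  ((n %/ e)%:Z - j%:Z) * d%:Z.

(* (x_1, ..., x_{2u}) in V_{s,u}; the tuple is encoded by x : nat -> F
   using indices 1 .. 2u (other values are irrelevant). *)
Definition in_V (F : finFieldType) (m n d e s u : nat) (x : nat -> F) : Prop :=
  forall j : nat, (j <= s)%N ->
    \sum_(1 <= i < u.+1)
      (x (2 * i - 1)%N * frobz m (Vexp n d e j) (x (2 * i)%N)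
       + frobz m (Vexp n d e j) (x (2 * i - 1)%N) * x (2 * i)%N) = 0.

(* The subfield F_{2^e} of F (for e | m): the elements fixed by x |-> x^(2^e). *)
Definition in_subF2e (F : finFieldType) (e : nat) (c : F) : bool :=
  c ^+ (2 ^ e) == c.

Definition lin_dep_over (F : finFieldType) (e : nat) (ys : seq F) : Prop :=
  exists c : seq F,
    [/\ size c = size ys, all (in_subF2e e) c, has (fun a => a != 0) c &
        \sum_(i < size ys) c`_i * ys`_i = 0].

(* Write a_i = x_(2i-1), b_i = x_(2i) and sigma for the Frobenius power y |-> y^(2^d).
   Since gcd(m, d) = e, the fixed field of sigma is F_(2^e), and sigma has order
   dividing 2k with k = n/e.  The j-th equation of V_(s,u) says
   sum_i a_i sigma^p(b_i) + sigma^p(a_i) b_i = 0 for p = k - j; applying sigma^(-p)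
   shows that it also holds for -p = k + j (mod 2k), hence for the 2s + 1 >= 2u
   consecutive exponents k - s, ..., k + s.  If a_1, b_1, ..., b_u were free over
   F_(2^e), extend them to a free family g_1, ..., g_r (r <= 2u) spanning all the a_i.
   Expanding the equations in the g_h, the vector of coefficients of the g_h is killed
   by the Moore matrix (sigma^(p+j)(g_h))_(j,h), which is invertible because the g_h
   are free over the fixed field of sigma.  The coefficient of g_1 = a_1 then gives
   b_1 + sum_(i>1) t_i b_i = 0 with t_i in F_(2^e), a contradiction. *)

From HB Require Import structures.
From mathcomp Require Import all_boot all_order all_algebra all_field.
From mathcomp Require Import zify.
From Stdlib Require Import Classical.
Import GRing.Theory.
Local Open Scope ring_scope.
Set Implicit Arguments. Unset Strict Implicit. Unset Printing Implicit Defensive.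

Section IterRMorphism.
Variables (R : pzSemiRingType) (f : {rmorphism R -> R}) (n : nat).

Fact iter_is_nmod_morphism : nmod_morphism (iter n f).
Proof.
split; first by elim: n => [|k IH] //=; rewrite IH rmorph0.
by move=> x y; elim: n => [|k IH] //=; rewrite IH rmorphD.
Qed.

Fact iter_is_monoid_morphism : monoid_morphism (iter n f).
Proof.
split; first by elim: n => [|k IH] //=; rewrite IH rmorph1.
by move=> x y; elim: n => [|k IH] //=; rewrite IH rmorphM.
Qed.

HB.instance Definition _ :=
  GRing.isNmodMorphism.Build R R (iter n f) iter_is_nmod_morphism.
HB.instance Definition _ :=
  GRing.isMonoidMorphism.Build R R (iter n f) iter_is_monoid_morphism.

End IterRMorphism.

Lemma iter_modn (T : Type) (f : T -> T) N p x :
  (forall y, iter N f y = y) -> iter p f x = iter (p %% N) f x.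
Proof.
by move=> fN; rewrite {1}(divn_eq p N) iterD iterM iter_fix.
Qed.

Lemma iter_fix_gcdn (T : Type) (f : T -> T) m d x : (0 < m)%N ->
  (forall y, iter m f y = y) -> iter d f x = x -> iter (gcdn m d) f x = x.
Proof.
move=> m_gt0 fm fdx; have [km kn def_km _] := egcdnP d m_gt0.
rewrite -[RHS](iter_fix km (fm x)) -iterM def_km addnC iterD.
by rewrite iterM (iter_fix kn fdx).
Qed.

Lemma sum_ord_delta (R : pzSemiRingType) r a (g : nat -> R) : (a < r)%N ->
  \sum_(h < r) (h == a :> nat)%:R * g h = g a.
Proof.
move=> lt_ar; rewrite (bigD1 (Ordinal lt_ar)) //= eqxx mul1r big1 ?addr0 // => h.
by rewrite -val_eqE /= => /negPf->; rewrite mul0r.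
Qed.

Lemma iter_pFrobenius_autE (R : nzRingType) p (pcharRp : p \in [pchar R]) n x :
  iter n (pFrobenius_aut pcharRp) x = x ^+ (p ^ n).
Proof.
elim: n => [|n IH]; first by rewrite expr1.
by rewrite iterS IH pFrobenius_autE -exprM -expnSr.
Qed.

Lemma iter_pFrobenius_card (F : finFieldType) p m (pcharFp : p \in [pchar F]) x :
  #|F| = (p ^ m)%N -> iter m (pFrobenius_aut pcharFp) x = x.
Proof. by move=> cardF; rewrite iter_pFrobenius_autE -cardF expf_card. Qed.

Lemma iter_pFrobenius_modn (F : finFieldType) p m (pcharFp : p \in [pchar F]) a x :
  #|F| = (p ^ m)%N ->
  iter a (pFrobenius_aut pcharFp) x = iter (a %% m) (pFrobenius_aut pcharFp) x.
Proof. by move=> cardF; apply: iter_modn => y; apply: iter_pFrobenius_card. Qed.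

Lemma iter_pFrobenius2_fixed (F : finFieldType) m (pcharF2 : 2 \in [pchar F]) d t :
  (0 < m)%N -> #|F| = (2 ^ m)%N ->
  iter d (pFrobenius_aut pcharF2) t = t -> in_subF2e (gcdn m d) t.
Proof.
move=> m_gt0 cardF fix_t; rewrite /in_subF2e -iter_pFrobenius_autE; apply/eqP.
by apply: iter_fix_gcdn fix_t => // y; apply: iter_pFrobenius_card.
Qed.

Section FixedFieldIndependence.
Variables (F : fieldType) (sigma : {rmorphism F -> F}).

Definition free_fixed r (g : nat -> F) := forall t : nat -> F,
  (forall i, (i < r)%N -> sigma (t i) = t i) ->
  \sum_(i < r) t i * g i = 0 -> forall i, (i < r)%N -> t i = 0.

Lemma free_fixedPn r g : ~ free_fixed r g -> exists t : nat -> F,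
  [/\ forall i, (i < r)%N -> sigma (t i) = t i,
      \sum_(i < r) t i * g i = 0 & exists2 i, (i < r)%N & t i != 0].
Proof.
move=> not_free; apply: NNPP => no_rel; apply: not_free => t t_fix t_rel i lt_ir.
by apply: NNPP => /eqP ti_neq0; apply: no_rel; exists t; split => //; exists i.
Qed.

Lemma eq_free_fixed r g1 g2 : (forall i, (i < r)%N -> g1 i = g2 i) ->
  free_fixed r g1 -> free_fixed r g2.
Proof.
move=> eq_g free_g1 t t_fix t_rel; apply: free_g1 => //.
by apply: etrans t_rel; apply: eq_bigr => i _; rewrite eq_g.
Qed.

Lemma free_fixed_behead r g : free_fixed r.+1 g -> free_fixed r (g \o succn).
Proof.
move=> free_g t t_fix t_rel i lt_ir.
apply: (free_g (fun l => if l is l'.+1 then t l' else 0) _ _ i.+1 lt_ir).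
  by case=> [|l] lt_lr /=; rewrite ?rmorph0 ?t_fix.
by rewrite big_ord_recl mul0r add0r.
Qed.

Lemma free_fixed_comp r g : free_fixed r g -> free_fixed r (sigma \o g).
Proof.
move=> free_g t t_fix t_rel; apply: free_g => //; apply: (fmorph_inj sigma).
rewrite rmorph0 -[RHS]t_rel rmorph_sum; apply: eq_bigr => i _.
by rewrite rmorphM t_fix.
Qed.

Lemma free_fixed_iter k r g : free_fixed r g -> free_fixed r (iter k sigma \o g).
Proof. by move=> free_g; elim: k => [|k IH] //; apply: free_fixed_comp IH. Qed.

Lemma moore_eq0 r g (c : nat -> F) : free_fixed r g ->
  (forall j, (j < r)%N -> \sum_(l < r) c l * iter j sigma (g l) = 0) ->
  forall l, (l < r)%N -> c l = 0.
Proof.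
elim: r g c => [|r IH] g c free_g c_rel l lt_lr //.
have [c0_eq0|c0_neq0] := eqVneq (c 0%N) 0.
  case: l lt_lr => [|l] // lt_lr.
  have := IH _ (c \o succn) (free_fixed_behead free_g); apply=> // j lt_jr.
  by have := c_rel j (ltnW lt_jr); rewrite big_ord_recl c0_eq0 mul0r add0r.
exfalso; clear l lt_lr; pose c' l := c 0%N * sigma (c l.+1) - sigma (c 0%N) * c l.+1.
(* Eliminating [g 0] between the relation [j] twisted by [sigma] and the relation
   [j.+1] leaves a relation of the same shape for the free family
   [sigma \o g \o succn]. *)
have c'_eq0 l : (l < r)%N -> c' l = 0.
  apply: (IH _ c' (free_fixed_comp (free_fixed_behead free_g))) => j lt_jr.
  have /(congr1 sigma) := c_rel j (ltnW lt_jr); rewrite rmorph0 rmorph_sum => rel_j.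
  have rel_j1 := c_rel j.+1 lt_jr.
  transitivity (c 0%N * \sum_(l < r.+1) sigma (c l * iter j sigma (g l))
               - sigma (c 0%N) * \sum_(l < r.+1) c l * iter j.+1 sigma (g l));
    last by rewrite rel_j rel_j1 !mulr0 subrr.
  rewrite !big_distrr -sumrB big_ord_recl /= rmorphM mulrCA subrr add0r.
  apply: eq_bigr => i _; rewrite rmorphM /c' -iterSr /=.
  by rewrite mulrBl !mulrA.
pose t l := c l / c 0%N.
have t_fix l : (l < r.+1)%N -> sigma (t l) = t l.
  case: l => [|l] lt_lr; first by rewrite /t divff // rmorph1.
  have /eqP := c'_eq0 l lt_lr; rewrite subr_eq0 => /eqP c'l.
  apply: (mulfI c0_neq0); rewrite /t rmorphM fmorphV mulrA c'l mulrAC.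
  by rewrite divff ?fmorph_eq0 // mul1r mulrC divfK.
have t_rel : \sum_(l < r.+1) t l * g l = 0.
  rewrite -[LHS](mulKf c0_neq0) big_distrr -[RHS](mulr0 (c 0%N)^-1).
  congr (_ * _); rewrite -[RHS](c_rel 0%N) //; apply: eq_bigr => l _.
  by rewrite /= /t mulrA [c 0%N * _]mulrC divfK.
by have := free_g t t_fix t_rel 0%N isT; rewrite /t divff // => /eqP; rewrite oner_eq0.
Qed.

Lemma moore_coord_eq0 r g M (v c : nat -> F) (T : nat -> nat -> F) k :
  free_fixed r g -> (forall l h, (l < M)%N -> (h < r)%N -> sigma (T l h) = T l h) ->
  (forall l, (l < M)%N -> v l = \sum_(h < r) T l h * g h) ->
  (forall j, (j < r)%N -> \sum_(l < M) c l * iter (k + j) sigma (v l) = 0) ->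
  forall h, (h < r)%N -> \sum_(l < M) c l * T l h = 0.
Proof.
move=> free_g T_fix v_def c_rel h lt_hr.
have := moore_eq0 (c := fun h => \sum_(l < M) c l * T l h)
  (free_fixed_iter (k := k) free_g).
apply=> // j lt_jr.
rewrite -[RHS](c_rel j lt_jr); under [RHS]eq_bigr => l _.
  by rewrite v_def // rmorph_sum big_distrr; over.
rewrite exchange_big; apply: eq_bigr => h' _; rewrite big_distrl.
apply: eq_bigr => l _ /=.
by rewrite rmorphM /= (iter_fix _ (T_fix l h' _ _)) // (addnC k) iterD mulrA.
Qed.

Lemma not_free_fixed_span r g w : free_fixed r g ->
  ~ free_fixed r.+1 [eta g with r |-> w] ->
  exists2 T : nat -> F, forall h, (h < r)%N -> sigma (T h) = T h &
    w = \sum_(h < r) T h * g h.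
Proof.
move=> free_g /free_fixedPn[t [t_fix t_rel [i lt_ir ti_neq0]]].
move: t_rel; rewrite big_ord_recr /= eqxx.
under eq_bigr => h _ do rewrite ltn_eqF //.
have [tr_eq0|tr_neq0] := eqVneq (t r) 0.
  rewrite tr_eq0 mul0r addr0 => t_rel.
  have lt_ir' : (i < r)%N.
    rewrite ltn_neqAle -ltnS lt_ir andbT.
    by apply: contraNneq ti_neq0 => ->; rewrite tr_eq0.
  by case/eqP: ti_neq0; apply: (free_g _ _ t_rel i lt_ir') => l /ltnW; apply: t_fix.
move/eqP; rewrite addrC addr_eq0 => /eqP t_rel.
exists (fun h => - t h / t r).
  by move=> h lt_hr; rewrite rmorphM rmorphN fmorphV !t_fix // ltnW.
apply: (mulfI tr_neq0); rewrite t_rel big_distrr -sumrN; apply: eq_bigr => h _.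
by rewrite /= mulrA [t r * _]mulrC divfK // mulNr.
Qed.

Lemma free_fixed_extend r0 g0 L (w : nat -> F) : free_fixed r0 g0 ->
  exists r g (T : nat -> nat -> F),
  [/\ (r0 <= r <= r0 + L)%N, forall h, (h < r0)%N -> g h = g0 h, free_fixed r g,
      forall i h, (i < L)%N -> (h < r)%N -> sigma (T i h) = T i h &
      forall i, (i < L)%N -> w i = \sum_(h < r) T i h * g h].
Proof.
move=> free_g0; elim: L => [|L [r [g [T [/andP[le_r0r le_rL] g_g0 free_g T_fix w_span]]]]].
  by exists r0, g0, (fun _ _ => 0); rewrite addn0 leqnn.
have le_iL i : (i < L.+1)%N -> i != L -> (i < L)%N by rewrite ltnS ltn_neqAle => -> ->.
have [free_gw|/(not_free_fixed_span free_g)[TL TL_fix wL_span]] :=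
  classic (free_fixed r.+1 [eta g with r |-> w L]).
  pose T' i := [eta if i == L then fun=> 0 else T i with r |-> (i == L)%:R].
  exists r.+1, [eta g with r |-> w L], T'; split=> //.
  - by rewrite addnS ltnS le_rL leqW.
  - by move=> h lt_hr0 /=; rewrite ltn_eqF ?g_g0 // (leq_trans lt_hr0).
  - move=> i h lt_iL lt_hr /=; case: eqP => [_|/eqP h_neq_r]; first exact: rmorph_nat.
    case: eqP => [_|/eqP i_neq_L]; first exact: rmorph0.
    by apply: T_fix; [exact: le_iL | rewrite ltn_neqAle h_neq_r -ltnS].
  - move=> i lt_iL; rewrite big_ord_recr /= !eqxx.
    under eq_bigr => h _ do rewrite ltn_eqF //.
    case: eqP => [->|/eqP i_neq_L].
      by rewrite big1 ?add0r ?mul1r // => h; rewrite mul0r.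
    by rewrite mul0r addr0 w_span ?le_iL.
exists r, g, (fun i => if i == L then TL else T i); split=> //.
- by rewrite addnS le_r0r leqW.
- move=> i h lt_iL lt_hr; case: eqP => [_|/eqP i_neq_L]; first exact: TL_fix.
  by apply: T_fix; rewrite ?le_iL.
- by move=> i lt_iL; case: eqP => [->|/eqP i_neq_L] //; rewrite w_span ?le_iL.
Qed.

Definition sym_form u (a b : nat -> F) (f : F -> F) :=
  \sum_(i < u) (a i * f (b i) + f (a i) * b i).

Lemma sym_form_iter_reflect N p q u (a b : nat -> F) :
  (forall y, iter N sigma y = y) -> (N %| p + q)%N ->
  sym_form u a b (iter p sigma) = 0 -> sym_form u a b (iter q sigma) = 0.
Proof.
move=> sN /dvdnP[c pq_def] /(congr1 (iter q sigma)); rewrite rmorph0 rmorph_sum => form_p.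
rewrite -[RHS]form_p; apply: eq_bigr => i _.
by rewrite rmorphD !rmorphM /= -!iterD addnC pq_def !iterM !(iter_fix _ (sN _)) addrC.
Qed.

Lemma not_free_fixed_sym_form u k (a b : nat -> F) : (0 < u)%N ->
  (forall j, (j < u + u)%N -> sym_form u a b (iter (k + j) sigma) = 0) ->
  ~ free_fixed u.+1 (fun h => if h is h'.+1 then b h' else a 0%N).
Proof.
move=> u_gt0 form_eq0 free_ab.
set y := fun h => _ in free_ab.
have [r [g [T [/andP[le_ur le_r] g_ab free_g T_fix a_span]]]] :=
  free_fixed_extend u.-1 (a \o succn) free_ab.
rewrite addSnnS prednK // in le_r.
(* [sym_form] is [sum_l c l * f (v l)] for v = (b, a) and c = (a, b); [Ta] and [Tv]
   give the coordinates of the a_i and of the v_l in the free family g. *)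
pose Ta i h := if i is i'.+1 then T i' h else (h == 0%N)%:R.
pose v l := if (l < u)%N then b l else a (l - u)%N.
pose c l := if (l < u)%N then a l else b (l - u)%N.
pose Tv l h := if (l < u)%N then (h == l.+1)%:R else Ta (l - u)%N h.
have Ta_fix i h : (i < u)%N -> (h < r)%N -> sigma (Ta i h) = Ta i h.
  case: i => [|i] lt_iu lt_hr; first exact: rmorph_nat.
  by apply: T_fix; rewrite // -ltnS prednK.
have Tv_fix l h : (l < u + u)%N -> (h < r)%N -> sigma (Tv l h) = Tv l h.
  rewrite /Tv; case: ifP => [_ _ _|/negbT]; first exact: rmorph_nat.
  by rewrite -leqNgt => le_ul lt_l lt_hr; apply: Ta_fix; rewrite // ltn_subLR.
have a_coord i : (i < u)%N -> a i = \sum_(h < r) Ta i h * g h.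
  case: i => [|i] lt_iu; first by rewrite sum_ord_delta ?g_ab // (leq_trans _ le_ur).
  by apply: a_span; rewrite -ltnS prednK.
have v_coord l : (l < u + u)%N -> v l = \sum_(h < r) Tv l h * g h.
  rewrite /v /Tv; case: ifP => [lt_lu _|/negbT].
    by rewrite sum_ord_delta ?g_ab // (leq_ltn_trans lt_lu le_ur).
  by rewrite -leqNgt => le_ul lt_l; apply: a_coord; rewrite ltn_subLR.
have moore_rel j : (j < r)%N -> \sum_(l < u + u) c l * iter (k + j) sigma (v l) = 0.
  move=> lt_jr; rewrite -[RHS](form_eq0 j (leq_trans lt_jr le_r)).
  rewrite big_split_ord /sym_form big_split.
  congr (_ + _); apply: eq_bigr => i _; rewrite /c /v /=.
    by rewrite ltn_ord.
  by rewrite ltnNge leq_addr /= addKn mulrC.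
have := moore_coord_eq0 free_g Tv_fix v_coord moore_rel (ltn_trans u_gt0 le_ur).
rewrite big_split_ord /= big1 ?add0r => [b_rel|i _]; last by rewrite /Tv ltn_ord mulr0.
pose t h := if h is h'.+1 then Ta h' 0%N else 0.
have t_fix h : (h < u.+1)%N -> sigma (t h) = t h.
  by case: h => [|h] lt_hu /=; rewrite ?rmorph0 // Ta_fix // (ltn_trans u_gt0 le_ur).
have t_rel : \sum_(h < u.+1) t h * y h = 0.
  rewrite big_ord_recl mul0r add0r -[RHS]b_rel; apply: eq_bigr => i _.
  by rewrite /Tv /c ltnNge leq_addr /= addKn mulrC.
by have /eqP := free_ab t t_fix t_rel 1%N u_gt0; rewrite oner_eq0.
Qed.

End FixedFieldIndependence.

Lemma not_free_fixed_lin_dep_over (F : finFieldType) e (sigma : {rmorphism F -> F})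
    (ys : seq F) :
  (forall t, sigma t = t -> in_subF2e e t) ->
  ~ free_fixed sigma (size ys) (nth 0 ys) -> lin_dep_over e ys.
Proof.
move=> fixed_sub /free_fixedPn[t [t_fix t_rel [i lt_i ti_neq0]]].
exists (mkseq t (size ys)); split.
- by rewrite size_mkseq.
- apply/allP => c /mapP[h]; rewrite mem_iota => /andP[_ lt_h] ->.
  exact/fixed_sub/t_fix.
- by apply/hasP; exists (t i) => //; rewrite -(nth_mkseq 0 t lt_i) mem_nth ?size_mkseq.
- by rewrite -[RHS]t_rel; apply: eq_bigr => h _; rewrite nth_mkseq.
Qed.


Section SystemV.
Variables (F : finFieldType) (m n d e s u : nat) (x : nat -> F).
Variable pcharF2 : 2 \in [pchar F].
Hypotheses (n_gt0 : (0 < n)%N) (cardF : #|F| = (2 ^ m)%N).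
Hypotheses (m2n : m = (2 * n)%N) (e_gcd : e = gcdn n d).
Hypothesis xV : in_V m n d e s u x.
Local Notation sigma := (iter d (pFrobenius_aut pcharF2)).
Local Notation k := (n %/ e)%N.
Local Notation a := (fun i => x (2 * i + 1)%N).
Local Notation b := (fun i => x (2 * i + 2)%N).

Let k_gt0 : (0 < k)%N.
Proof. by rewrite divn_gt0 ?e_gcd ?gcdn_gt0 ?n_gt0 // dvdn_leq // dvdn_gcdl. Qed.

Let k_mul_d : (k * d = n * (d %/ e))%N.
Proof. by rewrite e_gcd mulnC muln_divCA_gcd. Qed.

Lemma Vexp_modn j : (j <= s)%N ->
  `|(Vexp n d e j %% m)%Z|%N = ((k + 2 * k * s - j) * d %% m)%N.
Proof.
move=> le_js; rewrite /Vexp.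
suff -> : (k%:Z - j%:Z) * d%:Z = - (s * (d %/ e))%:Z * m%:Z + ((k + 2 * k * s - j) * d)%:Z.
  by rewrite modzMDl modz_nat.
move: k_gt0 k_mul_d; rewrite m2n; move: (n %/ e)%N (d %/ e)%N => K D; nia.
Qed.

Lemma in_V_sym_form j : (j <= s)%N ->
  sym_form u a b (iter (k + 2 * k * s - j) sigma) = 0.
Proof.
move=> le_js; rewrite -[RHS](xV le_js) big_add1 big_mkord; apply: eq_bigr => i _.
have frobzE y : frobz m (Vexp n d e j) y = iter (k + 2 * k * s - j) sigma y.
  rewrite /frobz Vexp_modn // -iter_pFrobenius_autE.
  by rewrite -(iter_pFrobenius_modn _ _ _ cardF) iterM.
have -> : (2 * i.+1 - 1 = 2 * i + 1)%N by lia.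
have -> : (2 * i.+1 = 2 * i + 2)%N by lia.
by rewrite !frobzE.
Qed.

Lemma iter_sigma_period y : iter (2 * k) sigma y = y.
Proof.
rewrite -iterM (iter_pFrobenius_modn _ _ _ cardF).
suff -> : (2 * k * d = d %/ e * m)%N by rewrite modnMl.
by move: k_mul_d; rewrite m2n; move: (n %/ e)%N (d %/ e)%N => K D; nia.
Qed.

Lemma in_V_sym_form_all J : (J <= s + s)%N ->
  sym_form u a b (iter (k + 2 * k * s - s + J) sigma) = 0.
Proof.
move=> le_J; have := k_gt0 => k_pos.
have [le_Js|lt_sJ] := leqP J s.
  have -> : (k + 2 * k * s - s + J = k + 2 * k * s - (s - J))%N by nia.
  exact/in_V_sym_form/leq_subr.
apply: (sym_form_iter_reflect iter_sigma_period _ (in_V_sym_form (j := J - s) _)).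
  by apply/dvdnP; exists (1 + 2 * s)%N; nia.
by rewrite leq_subLR.
Qed.

End SystemV.

Theorem theorem5p2 (F : finFieldType) (m n d e s u : nat) (x : nat -> F) :
  (0 < m)%N -> (0 < n)%N -> (0 < d)%N -> (0 < e)%N ->
  #|F| = (2 ^ m)%N -> m = (2 * n)%N ->
  e = gcdn n d -> e = gcdn m d ->
  (1 <= u)%N -> (u <= s)%N ->
  in_V m n d e s u x ->
  lin_dep_over e (x 1%N :: [seq x (2 * i)%N | i <- iota 1 u]).
Proof.
move=> m_gt0 n_gt0 _ _ cardF m2n e_gcdnd e_gcdmd u_gt0 le_us xV.
have pcharF2 : 2 \in [pchar F] by apply: card_finPcharP cardF _.
pose sigma := iter d (pFrobenius_aut pcharF2).
apply: (@not_free_fixed_lin_dep_over _ _ sigma).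
  by move=> t; rewrite e_gcdmd; exact: iter_pFrobenius2_fixed m_gt0 cardF.
set k0 := (n %/ e + 2 * (n %/ e) * s - s)%N.
have form_eq0 j : (j < u + u)%N ->
    sym_form u (fun i => x (2 * i + 1)%N) (fun i => x (2 * i + 2)%N)
      (iter (k0 + j) sigma) = 0.
  move=> lt_j; have le_j : (j <= s + s)%N by lia.
  exact: (in_V_sym_form_all pcharF2 n_gt0 cardF m2n e_gcdnd xV le_j).
move=> free_x; apply: (not_free_fixed_sym_form u_gt0 form_eq0).
rewrite /= size_map size_iota in free_x; apply: (eq_free_fixed _ free_x).
case=> [|i] //= lt_iu; rewrite (nth_map 0%N) ?size_iota // nth_iota //.
by rewrite add1n mulnSr.
Qed.
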